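(* Let $1\le q\le k$, $n\ge 2$, $f\in P_1^{k,q}$, and for $i=1,\dots,n$ let $a_i,b_i\in E_k$ with $\gcd(a_i,k)=1$ and $g_i(x_i)=[a_if(x_i)+b_i]\bmod k$. Let $h(x_1,\dots,x_n)=[g_1(x_1)+\dots+g_n(x_n)]\bmod k$. Let $1<t\le n$ and distinct indices $j_1,\dots,j_t\in\{1,\dots,n\}$ satisfy $\gcd(a_{j_1}+a_{j_2}+\dots+a_{j_t},k)=1$. Then the function obtained from $h$ by identifying the variables $x_{j_1},\dots,x_{j_t}$ (i.e. substituting one common variable $z$ — either a new variable or one of $x_{j_1},\dots,x_{j_t}$ — for all of them), regarded as a function of $z$ and the remaining $n-t$ variables, belongs to $P_{n-t+1}^k$ and is an $H(q)$-function.
   Context: $E_k=\{0,1,\dots,k-1\}$, $k\ge 2$, with arithmetic modulo $k$. $P_m^k$ is the set of all functions $E_k^m\to E_k$; $P_1^{k,q}$ is the set of functions $E_k\to E_k$ taking exactly $q$ distinct values. For a variable $x$ of a function $g$, $\mathrm{Spr}(x,g)$ is the set of numbers of distinct values of all one-variable functions obtained from $g$ by fixing all variables other than $x$ to constants (for a function of the single variable $x$, this is $\{$number of its distinct values$\}$). A function $g$ is an $H(q)$-function if $\mathrm{Spr}(x,g)=\{q\}$ for every variable $x$ of $g$. *)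

From mathcomp Require Import all_boot.
Set Implicit Arguments. Unset Strict Implicit. Unset Printing Implicit Defensive.

(* E_k is represented by 'I_k; a function of P_m^k is a map
   {ffun 'I_m -> 'I_k} -> 'I_k (variables indexed by 'I_m). *)

Definition modk (k : nat) (hk : 0 < k) (n : nat) : 'I_k := Ordinal (ltn_pmod n hk).

Definition nvals (k : nat) (g : 'I_k -> 'I_k) : nat := #|[set g x | x : 'I_k]|.

Definition P1kq (k q : nat) (f : 'I_k -> 'I_k) : Prop := nvals f = q.

Definition upd (k m : nat) (c : {ffun 'I_m -> 'I_k}) (i : 'I_m) (x : 'I_k)
  : {ffun 'I_m -> 'I_k} := [ffun j => if j == i then x else c j].

Definition Spr (k m : nat) (g : {ffun 'I_m -> 'I_k} -> 'I_k) (i : 'I_m) (s : nat) : Prop :=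
  exists c : {ffun 'I_m -> 'I_k}, s = nvals (fun x => g (upd c i x)).

Definition H_fun (k m q : nat) (g : {ffun 'I_m -> 'I_k} -> 'I_k) : Prop :=
  forall (i : 'I_m) (s : nat), Spr g i s <-> s = q.

From mathcomp Require Import all_boot.

Set Implicit Arguments.
Unset Strict Implicit.
Unset Printing Implicit Defensive.

(* Write h(x) = [g_1(x_1) + ... + g_n(x_n)] mod k with g_i(x) = [a_i f(x) + b_i]
   mod k, and let sigma : {1..n} -> {1..n-t+1} be the identification map: it
   merges exactly the indices j_1, ..., j_t.  Fix a variable z of the
   identified function and constants for all other variables.  Then, modulo
   k, the resulting one-variable function is z |-> A f(z) + C, where C is a
   constant and A is the sum of the a_i over the fiber sigma^-1(z): this
   fiber is either {j_1, ..., j_t} or a single index, so A is coprime to k in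
   both cases.  Finally v |-> (A v + C) mod k is injective on E_k when A is
   coprime to k, and composing with an injection preserves the number of
   values, so every such restriction takes exactly q values. *)

Lemma nvals_comp (k : nat) (phi f : 'I_k -> 'I_k) :
  injective phi -> nvals (fun x => phi (f x)) = nvals f.
Proof. by move=> phi_inj; rewrite /nvals imset_comp card_imset. Qed.

(* An affine map v |-> (A v + C) mod k with A coprime to k is a bijection of
   E_k: if A v1 = A v2 mod k then k divides A (v1 - v2), hence v1 - v2. *)
Lemma affine_inj (k A C : nat) (hk0 : 0 < k) (hA : coprime A k) :
  injective (fun v : 'I_k => modk hk0 (A * v + C)).
Proof.
move=> v1 v2 /(congr1 val) /= /eqP; rewrite eqn_modDr => E.
apply/val_inj/eqP => /=.
wlog le21 : v1 v2 E / v2 <= v1.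
  move=> W; case: (leqP v2 v1) => [le|/ltnW le]; first exact: W.
  by rewrite eq_sym; apply: W le; rewrite eq_sym.
rewrite eqn_mod_dvd ?leq_mul // -mulnBr Gauss_dvdr 1?coprime_sym // in E.
have lt_k : v1 - v2 < k by apply: leq_ltn_trans (leq_subr _ _) _.
case: (posnP (v1 - v2)) => [/eqP D|pos]; first by rewrite eqn_leq le21 -subn_eq0 D.
by move: (dvdn_leq pos E); rewrite leqNgt lt_k.
Qed.

Lemma nvals_affine (k A C : nat) (hk0 : 0 < k) (f : 'I_k -> 'I_k) :
  coprime A k -> nvals (fun x => modk hk0 (A * f x + C)) = nvals f.
Proof. by move=> hA; rewrite (nvals_comp f (@affine_inj k A C hk0 hA)). Qed.

Section Fibers.

Variables (n t m : nat) (j : 'I_t -> 'I_n) (sigma : 'I_n -> 'I_m).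
Hypothesis j_inj : injective j.
Hypothesis sigma_fibers : forall i1 i2 : 'I_n, sigma i1 = sigma i2 <->
  (i1 = i2 \/ (i1 \in codom j /\ i2 \in codom j)).

(* A nonempty fiber of sigma is either the image of j or a singleton not
   meeting it; accordingly a sum over the fiber is a sum over j or a single
   term. *)
Lemma fiber_sum (F : 'I_n -> nat) (i0 : 'I_m) : (exists i, sigma i = i0) ->
  \sum_(i | sigma i == i0) F i = \sum_(s < t) F (j s) \/
  exists i, \sum_(i' | sigma i' == i0) F i' = F i.
Proof.
move=> [i sigma_i].
case: (boolP (i \in codom j)) => [j_i | not_j_i].
  left; rewrite -(big_imset _ (in2W j_inj)) /=; apply: eq_bigl => i'.
  apply/eqP/imsetP => [|[s _ ->]]; rewrite -sigma_i.
    by case/sigma_fibers => [->|[/codomP[s ->] _]]; [case/codomP: j_i => s ->|];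
       exists s.
  by apply/sigma_fibers; right; split; rewrite ?codom_f.
right; exists i; rewrite (big_pred1 i) // => i'; apply/eqP/eqP => [|->//].
by rewrite -sigma_i => /sigma_fibers [//|[_ j_i]]; rewrite j_i in not_j_i.
Qed.

Lemma fiber_coprime (k : nat) (a : 'I_n -> nat) (i0 : 'I_m) :
  (forall i, coprime (a i) k) -> coprime (\sum_(s < t) a (j s)) k ->
  (exists i, sigma i = i0) -> coprime (\sum_(i | sigma i == i0) a i) k.
Proof.
move=> a_cop sum_cop /(fiber_sum a) [->//|[i ->]]; exact: a_cop.
Qed.

End Fibers.

Lemma identified_affine (k n m : nat) (hk0 : 0 < k) (f : 'I_k -> 'I_k)
    (a b : 'I_n -> nat) (sigma : 'I_n -> 'I_m)
    (c : {ffun 'I_m -> 'I_k}) (i0 : 'I_m) :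
  exists C, forall x : 'I_k,
    modk hk0 (\sum_(i < n) modk hk0 (a i * f (upd c i0 x (sigma i)) + b i)) =
    modk hk0 ((\sum_(i | sigma i == i0) a i) * f x + C).
Proof.
exists (\sum_(i | sigma i == i0) b i +
        \sum_(i | sigma i != i0) (a i * f (c (sigma i)) + b i) %% k) => x.
apply: val_inj => /=; rewrite (bigID (fun i => sigma i == i0)) /=.
under eq_bigr => i /eqP fib do rewrite /upd ffunE fib eqxx.
under [X in _ + X]eq_bigr => i /negbTE fib do rewrite /upd ffunE fib.
rewrite -modnDml modn_summ modnDml big_split /= -big_distrl /=.
by rewrite addnA.
Qed.

Theorem theorem2p3 (k q n : nat) (hk : 1 < k) (hq1 : 1 <= q) (hqk : q <= k)
  (hn : 2 <= n) (f : 'I_k -> 'I_k) (hf : P1kq q f)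
  (a b : 'I_n -> 'I_k) (ha : forall i, coprime (a i) k)
  (t : nat) (ht1 : 1 < t) (htn : t <= n) (j : 'I_t -> 'I_n) (hj : injective j)
  (hsum : coprime (\sum_(s < t) a (j s)) k)
  (sigma : 'I_n -> 'I_(n - t).+1)
  (hsig : forall i1 i2 : 'I_n, sigma i1 = sigma i2 <->
            (i1 = i2 \/ (i1 \in codom j /\ i2 \in codom j)))
  (hsurj : forall y : 'I_(n - t).+1, exists i, sigma i = y) :
  let hk0 : 0 < k := ltnW hk in
  let g (i : 'I_n) (x : 'I_k) : 'I_k := modk hk0 (a i * f x + b i) in
  let h (x : {ffun 'I_n -> 'I_k}) : 'I_k := modk hk0 (\sum_(i < n) g i (x i)) in
  H_fun q (fun y : {ffun 'I_(n - t).+1 -> 'I_k} => h [ffun i => y (sigma i)]).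
Proof.
move=> hk0 g h.
have restriction_nvals (i0 : 'I_(n - t).+1) (c : {ffun 'I_(n - t).+1 -> 'I_k}) :
    nvals (fun x => h [ffun i => upd c i0 x (sigma i)]) = q.
  have [C hC] := identified_affine hk0 f a b sigma c i0.
  have fib_cop : coprime (\sum_(i | sigma i == i0) a i) k :=
    fiber_coprime hj hsig ha hsum (hsurj i0).
  have affine_form : (fun x => h [ffun i => upd c i0 x (sigma i)]) =1
      (fun x => modk hk0 ((\sum_(i | sigma i == i0) a i) * f x + C)).
    by move=> x; rewrite -hC /h; congr modk; apply: eq_bigr => i _; rewrite ffunE.
  by rewrite -hf -(nvals_affine C hk0 f fib_cop) /nvals (eq_imset _ affine_form).
move=> i0 s; split=> [[c ->]|->]; first exact: restriction_nvals.
by exists [ffun _ => Ordinal hk0]; rewrite restriction_nvals.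
Qed.
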